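(* Let $f\in\mathbb{R}^{d_1\times\cdots\times d_m}$ with $f\ne0$, $1<p_1,\ldots,p_m<\infty$, $i\in[m]$, $(\lambda,\mathbf x^* )\in C_i^*$, $(\mu,\mathbf y^* )\in C^*$ and let $\Phi_i:C_i^*\to C^*$ be the bijection described below. Then: (i) if $(\lambda,\mathbf x^* )\ge0$ and $f\ge0$, then $\Phi_i(\lambda,\mathbf x^* )\ge0$; (ii) if $(\lambda,\mathbf x^* )>0$ and $f\ge0$ is weakly irreducible, then $\Phi_i(\lambda,\mathbf x^* )>0$; (iii) if $(\mu,\mathbf y^* )\ge0$, then $\Phi_i^{-1}(\mu,\mathbf y^* )\ge0$; (iv) if $(\mu,\mathbf y^* )>0$, then $\Phi_i^{-1}(\mu,\mathbf y^* )>0$.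
   Context: $f$ is identified with the multilinear form $f(\mathbf x)=\sum f_{j_1,\ldots,j_m}x_{1,j_1}\cdots x_{m,j_m}$ on $\mathcal R^d=\prod_k\mathbb{R}^{d_k}$; $\nabla_kf(\mathbf x)$ is the vector of partials $\partial f/\partial x_{k,j_k}$ (independent of $\mathbf x_k$, hence defined for $\mathbf x\in\mathcal R^{d-d_i}=\prod_{k\ne i}\mathbb{R}^{d_k}$). Inequalities entrywise (including the scalar component). $p'=p/(p-1)$; $\psi_q(\mathbf y)_j=|y_j|^{q-1}\mathrm{sign}(y_j)$. $\mathcal S^d=\{\mathbf x\in\mathcal R^d:\|\mathbf x_k\|_{p_k}=1\ \forall k\}$, $\mathcal S^{d-d_i}$ analogously for $k\ne i$. $Q(\mathbf x)=|f(\mathbf x)|/\prod_k\|\mathbf x_k\|_{p_k}$, $Q_i(\mathbf x)=\|\nabla_if(\mathbf x)\|_{p_i'}/\prod_{k\ne i}\|\mathbf x_k\|_{p_k}$. $C^*$ is the set of pairs $(\lambda,\mathbf x)$ with $\mathbf x\in\mathcal S^d$ a critical point of $Q$ (with $f(\mathbf x)\ne0$) and $\lambda=Q(\mathbf x)$; $C_i^*$ is the set of pairs $(\lambda,\mathbf x)$ with $\mathbf x\in\mathcal S^{d-d_i}$ a critical point of $Q_i$ (with $\nabla_if(\mathbf x)\ne0$) and $\lambda=Q_i(\mathbf x)$. $\Phi_i(\lambda,\mathbf x)=\big(\lambda,(\mathbf x_1,\ldots,\mathbf x_{i-1},\psi_{p_i'}(\varsigma_i(\mathbf x)\lambda^{-1}\nabla_if(\mathbf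 x)),\mathbf x_{i+1},\ldots,\mathbf x_m)\big)$ with $\varsigma_i(\mathbf x)=\mathrm{sign}\big(f(\mathbf x_1,\ldots,\mathbf x_{i-1},\psi_{p_i'}(\lambda^{-1}\nabla_if(\mathbf x)),\mathbf x_{i+1},\ldots,\mathbf x_m)\big)$; it is a bijection $C_i^*\to C^*$, whose inverse removes the $i$-th block. Weak irreducibility: the undirected graph on $\bigcup_k\{k\}\times[d_k]$ with $(k,j_k)\sim(l,j_l)$, $k\ne l$, iff $f_{j_1,\ldots,j_m}>0$ for some choice of remaining indices, is connected. *)

From HB Require Import structures.
From mathcomp Require Import all_boot all_order all_algebra.
From mathcomp Require Import all_classical all_reals all_analysis.
Set Implicit Arguments. Unset Strict Implicit. Unset Printing Implicit Defensive.
Import Order.TTheory GRing.Theory Num.Theory.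
Import numFieldNormedType.Exports.
Local Open Scope ring_scope.

Section Tensor.
Variables (R : realType) (m : nat) (d : 'I_m -> nat).

Definition MI := {dffun forall k : 'I_m, 'I_(d k)}.
Definition pt := forall k : 'I_m, 'I_(d k) -> R.

Definition mlf (f : MI -> R) (x : pt) : R :=
  \sum_(J : MI) f J * \prod_(k < m) x k (J k).

(* nabla_i f(x) : vector of partials d f / d x_{i,j}; independent of x_i *)
Definition nabla (f : MI -> R) (i : 'I_m) (x : pt) : 'I_(d i) -> R :=
  fun j => \sum_(J : MI | J i == j) f J * \prod_(k < m | k != i) x k (J k).

Definition ptadd (x v : pt) (t : R) : pt := fun k j => x k j + t * v k j.

(* R^{d-d_i} is encoded as the points of R^d whose i-th block is 0 *)
Definition reduced (i : 'I_m) (x : pt) : Prop := forall j, x i j = 0.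

End Tensor.
Arguments reduced {R m d} i x.
Arguments nabla {R m d} f i x.
Arguments ptadd {R m d} x v t.

Definition pnorm (R : realType) n (p : R) (v : 'I_n -> R) : R :=
  (\sum_(j < n) `|v j| `^ p) `^ p^-1.

Definition conjexp (R : realType) (p : R) : R := p / (p - 1).

Definition psi (R : realType) n (q : R) (y : 'I_n -> R) : 'I_n -> R :=
  fun j => `|y j| `^ (q - 1) * Num.sg (y j).

Section Ratios.
Variables (R : realType) (m : nat) (d : 'I_m -> nat) (f : MI d -> R) (p : 'I_m -> R).

Definition Q (x : pt R d) : R :=
  `|mlf f x| / \prod_(k < m) pnorm (p k) (x k).

Definition Qi (i : 'I_m) (x : pt R d) : R :=
  pnorm (conjexp (p i)) (nabla f i x) / \prod_(k < m | k != i) pnorm (p k) (x k).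

Definition critical (F : pt R d -> R) (D : pt R d -> Prop) (x : pt R d) : Prop :=
  forall v, D v -> is_derive (0 : R) (1 : R) (fun t : R => F (ptadd x v t)) 0.

Definition on_sphere (x : pt R d) : Prop :=
  forall k, pnorm (p k) (x k) = 1.

Definition on_sphere_i (i : 'I_m) (x : pt R d) : Prop :=
  (forall k, k != i -> pnorm (p k) (x k) = 1) /\ reduced i x.

Definition inC (lam : R) (x : pt R d) : Prop :=
  [/\ on_sphere x, mlf f x != 0, critical Q (fun _ => True) x & lam = Q x].

Definition inCi (i : 'I_m) (lam : R) (x : pt R d) : Prop :=
  [/\ on_sphere_i i x, (exists j, nabla f i x j != 0),
      critical (Qi i) (reduced i) x & lam = Qi i x].

Definition Phi (i : 'I_m) (lam : R) (x : pt R d) : R * pt R d :=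
  let s := Num.sg (mlf f (@dfwith _ (fun k : 'I_m => 'I_(d k) -> R) x i (psi (conjexp (p i)) (fun j => lam^-1 * nabla f i x j)))) in
  (lam, @dfwith _ (fun k : 'I_m => 'I_(d k) -> R) x i (psi (conjexp (p i)) (fun j => s * lam^-1 * nabla f i x j))).

End Ratios.
Arguments Qi {R m d} f p i x.
Arguments on_sphere_i {R m d} p i x.
Arguments inCi {R m d} f p i lam x.
Arguments Phi {R m d} f p i lam x.


Definition Phi_inv (R : realType) m (d : 'I_m -> nat) (i : 'I_m) (mu : R) (y : pt R d)
  : R * pt R d := (mu, @dfwith _ (fun k : 'I_m => 'I_(d k) -> R) y i (fun _ : 'I_(d i) => 0)).

Definition nonneg (R : realType) m (d : 'I_m -> nat) (z : R * pt R d) : Prop :=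
  0 <= z.1 /\ forall k j, 0 <= z.2 k j.
Definition pos (R : realType) m (d : 'I_m -> nat) (z : R * pt R d) : Prop :=
  0 < z.1 /\ forall k j, 0 < z.2 k j.
Definition nonneg_i (R : realType) m (d : 'I_m -> nat) (i : 'I_m) (z : R * pt R d) : Prop :=
  0 <= z.1 /\ forall k, k != i -> forall j, 0 <= z.2 k j.
Definition pos_i (R : realType) m (d : 'I_m -> nat) (i : 'I_m) (z : R * pt R d) : Prop :=
  0 < z.1 /\ forall k, k != i -> forall j, 0 < z.2 k j.

Definition vtx m (d : 'I_m -> nat) := {k : 'I_m & 'I_(d k)}.
Definition wedge (R : realType) m (d : 'I_m -> nat) (f : MI d -> R) : rel (vtx d) :=
  fun u v => (tag u != tag v) &&
    [exists J : MI d, [&& J (tag u) == tagged u, J (tag v) == tagged v & 0 < f J]].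
Definition weakly_irreducible (R : realType) m (d : 'I_m -> nat) (f : MI d -> R) : Prop :=
  forall u v : vtx d, connect (wedge f) u v.

Arguments Phi_inv {R m d} i mu y.
Arguments nonneg_i {R m d} i z.
Arguments pos_i {R m d} i z.

From HB Require Import structures.
From mathcomp Require Import all_boot all_order all_algebra.
From mathcomp Require Import all_classical all_reals all_analysis.
Import Order.TTheory GRing.Theory Num.Theory.
Local Open Scope ring_scope.

(* Everything is sign bookkeeping: f(x) and the entries of nabla_i f(x) are
   polynomials in the entries of x with the coefficients of f, psi_q preserves
   signs entrywise, and Phi_i and its inverse only replace the i-th block.
   For strict positivity of Phi_i, weak irreducibility guarantees that every
   index (i, j) lies in the support of f, so every partial of f is positive
   at a positive point. *)

Lemma psi_ge0 (R : realType) n (q : R) (y : 'I_n -> R) :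
  (forall j, 0 <= y j) -> forall j, 0 <= psi q y j.
Proof. by move=> y_ge0 j; rewrite /psi mulr_ge0 ?powR_ge0 // sgr_ge0. Qed.

Lemma psi_gt0 (R : realType) n (q : R) (y : 'I_n -> R) :
  (forall j, 0 < y j) -> forall j, 0 < psi q y j.
Proof.
by move=> y_gt0 j; rewrite /psi gtr0_sg // mulr1 powR_gt0 // normr_gt0 gt_eqF.
Qed.

Section SignOfForms.
Set Implicit Arguments.
Unset Strict Implicit.
Variables (R : realType) (m : nat) (d : 'I_m -> nat) (f : MI d -> R).
Hypothesis f_ge0 : forall J, 0 <= f J.

Local Notation setblock x i z := (@dfwith _ (fun k : 'I_m => 'I_(d k) -> R) x i z).

Lemma setblock_ge0 (x : pt R d) i z :
  (forall k, k != i -> forall j, 0 <= x k j) -> (forall j, 0 <= z j) ->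
  forall k j, 0 <= setblock x i z k j.
Proof.
move=> x_ge0 z_ge0 k; have [<-|ik] := eqVneq i k; first by rewrite dfwithin.
by rewrite dfwithout //; apply: x_ge0; rewrite eq_sym.
Qed.

Lemma setblock_gt0 (x : pt R d) i z :
  (forall k, k != i -> forall j, 0 < x k j) -> (forall j, 0 < z j) ->
  forall k j, 0 < setblock x i z k j.
Proof.
move=> x_gt0 z_gt0 k; have [<-|ik] := eqVneq i k; first by rewrite dfwithin.
by rewrite dfwithout //; apply: x_gt0; rewrite eq_sym.
Qed.

Lemma mlf_ge0 (x : pt R d) : (forall k j, 0 <= x k j) -> 0 <= mlf f x.
Proof. by move=> x_ge0; rewrite sumr_ge0 // => J _; rewrite mulr_ge0 ?prodr_ge0. Qed.

Lemma mlf_gt0 (x : pt R d) J0 :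
  0 < f J0 -> (forall k j, 0 < x k j) -> 0 < mlf f x.
Proof.
move=> fJ0_gt0 x_gt0; rewrite /mlf (bigD1 J0) //= ltr_wpDr ?mulr_gt0 ?prodr_gt0 //.
by rewrite sumr_ge0 // => J _; rewrite mulr_ge0 ?prodr_ge0 // => k _; apply/ltW.
Qed.

Lemma nabla_ge0 i (x : pt R d) :
  (forall k, k != i -> forall j, 0 <= x k j) -> forall j, 0 <= nabla f i x j.
Proof.
move=> x_ge0 j; rewrite sumr_ge0 // => J _.
by rewrite mulr_ge0 ?prodr_ge0 // => k /x_ge0.
Qed.

Lemma nabla_gt0 i (x : pt R d) J :
  0 < f J -> (forall k, k != i -> forall j, 0 < x k j) -> 0 < nabla f i x (J i).
Proof.
move=> fJ_gt0 x_gt0; rewrite /nabla (bigD1 J) //= ltr_wpDr //.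
  by rewrite sumr_ge0 // => J' _; rewrite mulr_ge0 ?prodr_ge0 // => k ki; exact/ltW/x_gt0.
by rewrite mulr_gt0 ?prodr_gt0 // => k /x_gt0.
Qed.

Lemma weakly_irreducible_support J0 i (j : 'I_(d i)) :
  0 < f J0 -> weakly_irreducible f -> exists2 J : MI d, J i = j & 0 < f J.
Proof.
move=> fJ0_gt0 irr_f; have [<-|j_neq] := eqVneq (J0 i) j; first by exists J0.
case/connectP: (irr_f (Tagged _ j) (Tagged _ (J0 i))) => [[|w s]] /=.
  by move=> _ /eqP; rewrite eq_Tagged /= (negbTE j_neq).
by case/andP=> /andP[_ /existsP[J /and3P[/eqP Jij _ fJ_gt0]]] _ _; exists J.
Qed.

End SignOfForms.

Lemma Phi_nonneg (R : realType) m (d : 'I_m -> nat) (f : MI d -> R) p i lam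
    (x : pt R d) :
  (forall J, 0 <= f J) -> nonneg_i i (lam, x) -> nonneg (Phi f p i lam x).
Proof.
move=> f_ge0 [/= lam_ge0 x_ge0]; split=> //=.
have grad_ge0 j : 0 <= lam^-1 * nabla f i x j by rewrite mulr_ge0 ?invr_ge0 ?nabla_ge0.
apply: setblock_ge0 => // j; apply: psi_ge0 => j'.
rewrite -mulrA mulr_ge0 // sgr_ge0 mlf_ge0 //.
by apply: setblock_ge0 => //; apply: psi_ge0.
Qed.

Lemma Phi_pos (R : realType) m (d : 'I_m -> nat) (f : MI d -> R) p i lam
    (x : pt R d) :
  (exists J, f J != 0) -> (forall J, 0 <= f J) -> weakly_irreducible f ->
  pos_i i (lam, x) -> pos (Phi f p i lam x).
Proof.
move=> [J0 fJ0_neq0] f_ge0 irr_f [/= lam_gt0 x_gt0]; split=> //=.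
have fJ0_gt0 : 0 < f J0 by rewrite lt_def fJ0_neq0 f_ge0.
have grad_gt0 j : 0 < lam^-1 * nabla f i x j.
  have [J <- fJ_gt0] := weakly_irreducible_support j fJ0_gt0 irr_f.
  by rewrite mulr_gt0 ?invr_gt0 ?nabla_gt0.
have sign_gt0 : 0 < mlf f (@dfwith _ (fun k : 'I_m => 'I_(d k) -> R) x i
    (psi (conjexp (p i)) (fun j => lam^-1 * nabla f i x j))).
  exact/(mlf_gt0 f_ge0 fJ0_gt0)/setblock_gt0/psi_gt0.
apply/setblock_gt0 => // j; apply: psi_gt0 => j'.
by rewrite gtr0_sg // mul1r.
Qed.

Lemma Phi_inv_nonneg (R : realType) m (d : 'I_m -> nat) i mu (y : pt R d) :
  nonneg (mu, y) -> nonneg_i i (Phi_inv i mu y).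
Proof. by move=> [/= mu_ge0 y_ge0]; split=> //= k ki j; rewrite dfwithout 1?eq_sym. Qed.

Lemma Phi_inv_pos (R : realType) m (d : 'I_m -> nat) i mu (y : pt R d) :
  pos (mu, y) -> pos_i i (Phi_inv i mu y).
Proof. by move=> [/= mu_gt0 y_gt0]; split=> //= k ki j; rewrite dfwithout 1?eq_sym. Qed.

Theorem corollary2 (R : realType) (m : nat) (d : 'I_m -> nat) (f : MI d -> R)
    (p : 'I_m -> R) (i : 'I_m) (lam : R) (x : pt R d) (mu : R) (y : pt R d) :
  (exists J, f J != 0) ->
  (forall k, 1 < p k) ->
  inCi f p i lam x ->
  inC f p mu y ->
  [/\ (nonneg_i i (lam, x) -> (forall J, 0 <= f J) -> nonneg (Phi f p i lam x)),
      (pos_i i (lam, x) -> (forall J, 0 <= f J) -> weakly_irreducible f ->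
         pos (Phi f p i lam x)),
      (nonneg (mu, y) -> nonneg_i i (Phi_inv i mu y))
    & (pos (mu, y) -> pos_i i (Phi_inv i mu y))].
Proof.
move=> f_neq0 _ _ _; split.
- by move=> x_ge0 f_ge0; apply: Phi_nonneg.
- by move=> x_gt0 f_ge0 irr_f; apply: Phi_pos.
- exact: Phi_inv_nonneg.
- exact: Phi_inv_pos.
Qed.
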